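(* Let $\mathbf a,\mathbf b\in\mathbb Z^2$ be arbitrary integral vectors and put $B=|\mathbf a\times\mathbf b|$. Define the integers $$B_0=-B,\quad B_1=B+\|\mathbf a\|^2,\quad B_2=B+\|\mathbf b\|^2,\quad B_{3,4}=B+\|\mathbf a\pm\mathbf b\|^2=B+\|\mathbf a\|^2+\|\mathbf b\|^2\pm2\,\mathbf a\cdot\mathbf b .$$ Then $\mathbf a,\mathbf b$ determine an everted Descartes configuration of disks $D_0,D_1,D_2,D_3$ with curvatures $(B_0,B_1,B_2,B_3)$ (and likewise, the conjugate one with $B_4$ in place of $B_3$), in which $\mathbf a=\mathrm{spin}(D_0,D_1)$ and $\mathbf b=\mathrm{spin}(D_0,D_2)$; consequently the Apollonian packing generated by it is integral. Moreover, for every vector $\mathbf v=\alpha\mathbf a+\beta\mathbf b$ with $\alpha,\beta\in\mathbb Z$, $\gcd(\alpha,\beta)=1$, there is a disk in the major corona (the set of disks of the packing tangent to $D_0$) with curvature $$B_{\mathbf v}=B+\|\mathbf v\|^2 .$$ If $\mathbf v,\mathbf w$ are two such linear combinations with $\mathbf v\times\mathbf w=\pm B$, then the disks of curvatures $B_0,B_{\mathbf v},B_{\mathbf w}$ form a tricycle.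
   Context: A disk is the interior (inner, positive curvature $1/r$) or exterior (outer, negative curvature $-1/r$, signed radius $-r$) of a circle of radius $r$; half-planes have curvature $0$. A tricycle is a configuration of three mutually tangent, non-overlapping disks; a Descartes configuration is four mutually tangent non-overlapping disks; it is everted if it contains a disk of negative (or zero) curvature, that disk being the major disk. Every tricycle is completed uniquely to an Apollonian packing by recursively inscribing new disks in the curvilinear triangular gaps; it is integral if all curvatures are integers. Tangency spinor: identifying the plane with $\mathbb C$, for tangent disks $A,B$ with centers $c_A,c_B$ and signed radii $r_A,r_B$, $\mathrm{spin}(A,B)=\pm\sqrt{(c_B-c_A)/(r_Ar_B)}$, regarded as a vector in $\mathbb R^2$ (defined up to sign). For $\mathbf a=(x,y)^T,\mathbf b=(x',y')^T$: $\mathbf a\cdot\mathbf b=xx'+yy'$, $\mathbf a\times\mathbf b=xy'-x'y$, $\|\mathbf a\|^2=\mathbf a\cdot\mathbf a$. *)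

From Stdlib Require Import Reals ZArith.
From Coquelicot Require Import Coquelicot.

Open Scope R_scope.

Definition zdot (a b : Z * Z) : Z := (fst a * fst b + snd a * snd b)%Z.
Definition zcross (a b : Z * Z) : Z := (fst a * snd b - fst b * snd a)%Z.
Definition znorm2 (a : Z * Z) : Z := zdot a a.
Definition zadd (a b : Z * Z) : Z * Z := (fst a + fst b, snd a + snd b)%Z.
Definition zsub (a b : Z * Z) : Z * Z := (fst a - fst b, snd a - snd b)%Z.
Definition zlin (alpha beta : Z) (a b : Z * Z) : Z * Z :=
  (alpha * fst a + beta * fst b, alpha * snd a + beta * snd b)%Z.
Definition zvec (a : Z * Z) : C := (IZR (fst a), IZR (snd a)).

(* Inner c r : interior {z : |z - c| < r} of the circle of center c, radius r
               (curvature 1/r, signed radius r);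
   Outer c r : exterior {z : |z - c| > r} of that circle
               (curvature -1/r, signed radius -r);
   Half p n  : open half-plane {z : (z - p) . n > 0} (curvature 0). *)
Inductive disk : Type :=
| Inner (c : C) (r : R)
| Outer (c : C) (r : R)
| Half (p : C) (n : C).

Definition cdot (z w : C) : R := fst z * fst w + snd z * snd w.

Definition wf_disk (D : disk) : Prop :=
  match D with
  | Inner _ r => 0 < r
  | Outer _ r => 0 < r
  | Half _ n => n <> 0%C
  end.

Definition in_disk (D : disk) (z : C) : Prop :=
  match D with
  | Inner c r => Cmod (z - c) < r
  | Outer c r => r < Cmod (z - c)
  | Half p n => 0 < cdot (z - p) n
  end.

Definition on_boundary (D : disk) (z : C) : Prop :=
  match D with
  | Inner c r => Cmod (z - c) = r
  | Outer c r => Cmod (z - c) = r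
  | Half p n => cdot (z - p) n = 0
  end.

Definition curvature (D : disk) : R :=
  match D with
  | Inner _ r => / r
  | Outer _ r => - / r
  | Half _ _ => 0
  end.

Definition circ_data (D : disk) : option (C * R) :=
  match D with
  | Inner c r => Some (c, r)
  | Outer c r => Some (c, - r)
  | Half _ _ => None
  end.

Definition tangent (A B : disk) : Prop :=
  exists! z : C, on_boundary A z /\ on_boundary B z.

Definition non_overlapping (A B : disk) : Prop :=
  forall z : C, ~ (in_disk A z /\ in_disk B z).

Definition tangent_no (A B : disk) : Prop := tangent A B /\ non_overlapping A B.

Definition tricycle (A B D : disk) : Prop :=
  wf_disk A /\ wf_disk B /\ wf_disk D /\
  tangent_no A B /\ tangent_no A D /\ tangent_no B D.

Definition descartes (A B D E : disk) : Prop :=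
  tricycle A B D /\ wf_disk E /\
  tangent_no A E /\ tangent_no B E /\ tangent_no D E.

Definition everted (A B D E : disk) : Prop :=
  descartes A B D E /\
  (curvature A <= 0 \/ curvature B <= 0 \/ curvature D <= 0 \/ curvature E <= 0).

(* s is a tangency spinor spin(A,B): s^2 = (c_B - c_A)/(r_A r_B) in C
   (the spinor is defined up to sign, i.e. s is one of the two square roots) *)
Definition is_spin (A B : disk) (s : C) : Prop :=
  exists cA rA cB rB,
    circ_data A = Some (cA, rA) /\ circ_data B = Some (cB, rB) /\
    (s * s)%C = ((cB - cA) / RtoC (rA * rB))%C.

(* Tricycles obtained by recursively inscribing a disk in a curvilinear
   triangular gap: a disk E inscribed in the gap of the tricycle (A,B,D) is
   one completing it to a Descartes configuration; the new gaps are the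
   tricycles (A,B,E), (A,E,D), (E,B,D). *)
Inductive gen_tricycle (A0 B0 D0 : disk) : disk -> disk -> disk -> Prop :=
| gt_init : gen_tricycle A0 B0 D0 A0 B0 D0
| gt_step1 A B D E : gen_tricycle A0 B0 D0 A B D -> descartes A B D E ->
    gen_tricycle A0 B0 D0 A B E
| gt_step2 A B D E : gen_tricycle A0 B0 D0 A B D -> descartes A B D E ->
    gen_tricycle A0 B0 D0 A E D
| gt_step3 A B D E : gen_tricycle A0 B0 D0 A B D -> descartes A B D E ->
    gen_tricycle A0 B0 D0 E B D.

Definition in_packing (A0 B0 D0 : disk) (X : disk) : Prop :=
  exists A B D, gen_tricycle A0 B0 D0 A B D /\ (X = A \/ X = B \/ X = D).

Definition integral_packing (A0 B0 D0 : disk) : Prop :=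
  forall X, in_packing A0 B0 D0 X -> exists k : Z, curvature X = IZR k.

Definition in_major_corona (A0 B0 D0 : disk) (X : disk) : Prop :=
  in_packing A0 B0 D0 X /\ tangent A0 X.

From Stdlib Require Import Reals ZArith Lra Psatz.
From Coquelicot Require Import Coquelicot.
Open Scope R_scope.

(* The configuration is explicit.  [D0] is the exterior of the circle of radius [1/B] about
   the origin; for [v] in [Z^2] the disk [D_v] has curvature [B + |v|^2] and centre
   [- v^2 / (B (B + |v|^2))] ([v^2] the complex square), so that [v] is a spinor of
   [(D0, D_v)].  Every [D_v] with [v <> 0] is internally tangent to [D0], and [D_v], [D_w] are
   externally tangent when [|v x w| = B]; hence [D0, D_u, D_w, D_e] is a Descartes
   configuration as soon as the coefficient vectors of [u, w, e] in the basis [a, b] are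
   pairwise unimodular.

   Integrality comes from Descartes' theorem, proved through the vanishing of the Gram
   determinant of four centres in the plane (directly when one disk is a half-plane): a
   tricycle with integer curvatures [k1, k2, k3] and [k1 k2 + k2 k3 + k3 k1 = s^2] is completed
   only by [k1 + k2 + k3 +- 2 s], and the three new tricycles keep a square discriminant.  For
   the root tricycle the discriminant is [(a.b)^2] by Lagrange's identity.

   Finally, inscribing disks at [D0] moves a pair of coefficient vectors [(u, w)] to
   [(u +- w, w)] or [(u, w +- u)], and Gauss reduction shows that these moves reach every
   unimodular pair from [(e1, e2)]; a coprime [(alpha, beta)] is the first row of such a pair
   by Bezout. *)


Definition Cnorm2 (z : C) : R := fst z ^ 2 + snd z ^ 2.

Lemma Cnorm2_sub (z c : C) : Cnorm2 (z - c) = (fst z - fst c) ^ 2 + (snd z - snd c) ^ 2.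
Proof. destruct z, c; unfold Cnorm2; simpl; ring. Qed.

Lemma cdot_sub (z p n : C) :
  cdot (z - p) n = (fst z - fst p) * fst n + (snd z - snd p) * snd n.
Proof. destruct z, p, n; unfold cdot; simpl; ring. Qed.

Lemma sum_sqr_eq0 x y : x ^ 2 + y ^ 2 = 0 -> x = 0 /\ y = 0.
Proof. intros H; split; nra. Qed.

Lemma Cnorm2_gt0 (n : C) : n <> 0%C -> 0 < Cnorm2 n.
Proof.
  intros Hn; destruct n as [x y]; unfold Cnorm2; cbn [fst snd].
  destruct (Req_dec (x ^ 2 + y ^ 2) 0) as [E|E]; [|nra].
  apply sum_sqr_eq0 in E as [-> ->]; contradiction Hn; reflexivity.
Qed.

Lemma Cmod_sqr (z : C) : Cmod z ^ 2 = Cnorm2 z.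
Proof. apply pow2_sqrt; unfold Cnorm2; nra. Qed.

Lemma Cmod_eq_sqr z r : 0 <= r -> Cmod z = r <-> Cnorm2 z = r ^ 2.
Proof.
  intros Hr; rewrite <- Cmod_sqr; pose proof (Cmod_ge_0 z).
  split; intros E; [subst r; reflexivity | nra].
Qed.

Lemma Cmod_lt_sqr z r : 0 <= r -> Cmod z < r <-> Cnorm2 z < r ^ 2.
Proof. intros Hr; rewrite <- Cmod_sqr; pose proof (Cmod_ge_0 z); split; intros; nra. Qed.

Lemma Cmod_gt_sqr z r : 0 <= r -> r < Cmod z <-> r ^ 2 < Cnorm2 z.
Proof. intros Hr; rewrite <- Cmod_sqr; pose proof (Cmod_ge_0 z); split; intros; nra. Qed.

(** * Necessary conditions for tangency *)

Definition kissing (X Y : disk) : Prop := wf_disk X /\ wf_disk Y /\ tangent_no X Y.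

Lemma kissing_sym X Y : kissing X Y -> kissing Y X.
Proof.
  intros (HX & HY & [z [[Hz1 Hz2] Hu]] & Hno); repeat split; auto.
  - exists z; split; auto; intros y [Hy1 Hy2]; auto.
  - intros y [Hy1 Hy2]; apply (Hno y); auto.
Qed.

(* If the common point is off the line of centres, its mirror image in that line is a second one. *)
Lemma tangent_circles_dist (c1 c2 : C) (r1 r2 : R) : 0 < r1 -> 0 < r2 ->
  (exists! z, Cmod (z - c1) = r1 /\ Cmod (z - c2) = r2) ->
  Cnorm2 (c2 - c1) = (r1 + r2) ^ 2 \/ Cnorm2 (c2 - c1) = (r1 - r2) ^ 2.
Proof.
  intros Hr1 Hr2 [z [[Hz1 Hz2] Hu]].
  apply Cmod_eq_sqr in Hz1, Hz2; try lra.
  rewrite Cnorm2_sub in *.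
  destruct c1 as [x1 y1], c2 as [x2 y2], z as [zx zy]; cbn [fst snd] in *.
  set (Q := (x2 - x1) ^ 2 + (y2 - y1) ^ 2).
  destruct (Req_dec Q 0) as [HQ|HQ].
  { apply sum_sqr_eq0 in HQ as [Hx Hy].
    assert (x2 = x1) by lra; assert (y2 = y1) by lra; subst x2 y2.
    assert (r1 = r2) by nra; subst r2; right; unfold Q; ring. }
  set (t := ((zx - x1) * (x2 - x1) + (zy - y1) * (y2 - y1)) / Q).
  assert (Hmirror : (2 * x1 + 2 * t * (x2 - x1) - zx, 2 * y1 + 2 * t * (y2 - y1) - zy) = (zx, zy)).
  { symmetry; apply Hu; split; apply Cmod_eq_sqr; try lra; rewrite Cnorm2_sub; cbn [fst snd].
    - rewrite <- Hz1; unfold t, Q; field; exact HQ.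
    - rewrite <- Hz2; unfold t, Q; field; exact HQ. }
  injection Hmirror as Ex Ey.
  assert (R1 : r1 ^ 2 = t ^ 2 * Q) by (unfold Q; rewrite <- Hz1; nra).
  assert (R2 : r2 ^ 2 = (t - 1) ^ 2 * Q) by (unfold Q; rewrite <- Hz2; nra).
  assert (K : (Q - (r1 + r2) ^ 2) * (Q - (r1 - r2) ^ 2) = 0).
  { replace ((Q - (r1 + r2) ^ 2) * (Q - (r1 - r2) ^ 2))
      with (Q * Q - 2 * Q * (r1 ^ 2 + r2 ^ 2) + (r1 ^ 2 - r2 ^ 2) ^ 2) by ring.
    rewrite R1, R2; ring. }
  apply Rmult_integral in K as [K|K]; [left|right]; lra.
Qed.

(* Same argument, mirroring in the line through the centre perpendicular to the boundary line. *)
Lemma tangent_circle_line_dist (c p n : C) (r : R) : 0 < r -> n <> 0%C ->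
  (exists! z, Cmod (z - c) = r /\ cdot (z - p) n = 0) ->
  cdot (c - p) n ^ 2 = r ^ 2 * Cnorm2 n.
Proof.
  intros Hr Hn [z [[Hz1 Hz2] Hu]].
  pose proof (Cnorm2_gt0 n Hn) as HN.
  apply Cmod_eq_sqr in Hz1; [|lra].
  rewrite Cnorm2_sub in Hz1; rewrite cdot_sub in Hz2 |- *.
  destruct c as [cx cy], p as [px py], n as [nx ny], z as [zx zy].
  unfold Cnorm2 in *; cbn [fst snd] in *.
  set (s := ((zy - cy) * nx - (zx - cx) * ny) / (nx ^ 2 + ny ^ 2)).
  assert (Hmirror : (zx + 2 * s * ny, zy - 2 * s * nx) = (zx, zy)).
  { symmetry; apply Hu; split.
    - apply Cmod_eq_sqr; [lra|]; rewrite Cnorm2_sub; cbn [fst snd].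
      rewrite <- Hz1; unfold s; field; lra.
    - rewrite cdot_sub; cbn [fst snd]; rewrite <- Hz2; ring. }
  injection Hmirror as Ex Ey.
  assert (Hs : s = 0).
  { assert (Hsx : s * nx = 0) by lra; assert (Hsy : s * ny = 0) by lra.
    assert (HsN : s * (nx ^ 2 + ny ^ 2) = 0).
    { replace (s * (nx ^ 2 + ny ^ 2)) with ((s * nx) * nx + (s * ny) * ny) by ring.
      rewrite Hsx, Hsy; ring. }
    apply Rmult_integral in HsN as [|]; lra. }
  assert (Hperp : (zy - cy) * nx - (zx - cx) * ny = 0).
  { unfold s in Hs; apply Rmult_integral in Hs as [H|H]; [exact H|].
    exfalso; apply Rinv_neq_0_compat in H; lra. }
  assert (L : (nx ^ 2 + ny ^ 2) * ((zx - cx) ^ 2 + (zy - cy) ^ 2)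
              = ((zx - cx) * nx + (zy - cy) * ny) ^ 2 + ((zy - cy) * nx - (zx - cx) * ny) ^ 2)
    by ring.
  rewrite Hperp, Hz1 in L.
  replace ((cx - px) * nx + (cy - py) * ny) with (- ((zx - cx) * nx + (zy - cy) * ny)) by lra.
  lra.
Qed.

Lemma kissing_Inner_Inner (c1 c2 : C) (r1 r2 : R) :
  kissing (Inner c1 r1) (Inner c2 r2) -> Cnorm2 (c2 - c1) = (r1 + r2) ^ 2.
Proof.
  intros (H1 & H2 & Ht & Hno); cbn in H1, H2.
  destruct (tangent_circles_dist c1 c2 r1 r2 H1 H2 Ht) as [E|E]; auto.
  exfalso; rewrite Cnorm2_sub in E.
  (* internally tangent disks: the centre of the smaller one lies in both *)
  destruct (Rle_dec r1 r2); [apply (Hno c1) | apply (Hno c2)]; cbn [in_disk];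
    split; apply Cmod_lt_sqr; try lra; rewrite Cnorm2_sub; nra.
Qed.

Lemma kissing_Inner_Outer (c1 c2 : C) (r1 r2 : R) :
  kissing (Inner c1 r1) (Outer c2 r2) -> Cnorm2 (c2 - c1) = (r1 - r2) ^ 2.
Proof.
  intros (H1 & H2 & Ht & Hno); cbn in H1, H2.
  destruct (tangent_circles_dist c1 c2 r1 r2 H1 H2 Ht) as [E|E]; auto.
  exfalso; rewrite Cnorm2_sub in E.
  apply (Hno c1); cbn [in_disk]; split.
  - apply Cmod_lt_sqr; [lra|]; rewrite Cnorm2_sub; nra.
  - apply Cmod_gt_sqr; [lra|]; rewrite Cnorm2_sub; nra.
Qed.

Lemma kissing_Inner_Half (c p n : C) (r : R) :
  kissing (Inner c r) (Half p n) -> cdot (c - p) n ^ 2 = r ^ 2 * Cnorm2 n /\ cdot (c - p) n <= 0.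
Proof.
  intros (Hr & Hn & Ht & Hno); cbn in Hr, Hn; split.
  - exact (tangent_circle_line_dist c p n r Hr Hn Ht).
  - destruct (Rle_dec (cdot (c - p) n) 0) as [|Hc]; auto.
    exfalso; apply (Hno c); cbn [in_disk]; split; [|lra].
    apply Cmod_lt_sqr; [lra|]; rewrite Cnorm2_sub; nra.
Qed.

Lemma Outer_Outer_overlap (c1 c2 : C) (r1 r2 : R) :
  0 < r1 -> 0 < r2 -> ~ non_overlapping (Outer c1 r1) (Outer c2 r2).
Proof.
  intros H1 H2 Hno.
  set (K := r1 + r2 + Rabs (fst c2 - fst c1) + 1).
  pose proof (Rle_abs (fst c2 - fst c1)).
  apply (Hno (fst c1 + K, snd c1)); cbn [in_disk]; split;
    apply Cmod_gt_sqr; try lra; rewrite Cnorm2_sub; cbn [fst snd].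
  - assert (r1 < K) by (unfold K; pose proof (Rabs_pos (fst c2 - fst c1)); lra).
    replace (fst c1 + K - fst c1) with K by ring; nra.
  - assert (r2 < fst c1 + K - fst c2) by (unfold K; lra).
    pose proof (pow2_ge_0 (snd c1 - snd c2)); nra.
Qed.

Lemma Outer_Half_overlap (c p n : C) (r : R) :
  0 < r -> n <> 0%C -> ~ non_overlapping (Outer c r) (Half p n).
Proof.
  intros Hr Hn Hno; pose proof (Cnorm2_gt0 n Hn) as HN.
  set (h := cdot (p - c) n).
  set (t := 1 + (h ^ 2 + r ^ 2 + 1) / Cnorm2 n).
  assert (Ht : t * Cnorm2 n = Cnorm2 n + h ^ 2 + r ^ 2 + 1) by (unfold t; field; lra).
  assert (Ht1 : 1 <= t)
    by (unfold t; pose proof (Rdiv_le_0_compat (h ^ 2 + r ^ 2 + 1) _ ltac:(nra) HN); lra).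
  apply (Hno (fst p + t * fst n, snd p + t * snd n)); cbn [in_disk]; split.
  - apply Cmod_gt_sqr; [lra|]; rewrite Cnorm2_sub; cbn [fst snd].
    replace ((fst p + t * fst n - fst c) ^ 2 + (snd p + t * snd n - snd c) ^ 2)
      with (Cnorm2 (p - c) + 2 * t * h + t * (t * Cnorm2 n))
      by (unfold h; rewrite cdot_sub, Cnorm2_sub; unfold Cnorm2; ring).
    rewrite Ht.
    assert (0 <= Cnorm2 (p - c)) by (unfold Cnorm2; nra).
    assert (0 <= t * (h + 1) ^ 2) by (apply Rmult_le_pos; [lra | apply pow2_ge_0]).
    assert (r ^ 2 <= t * r ^ 2) by nra.
    assert (0 < t * Cnorm2 n) by nra.
    nra.
  - rewrite cdot_sub; cbn [fst snd].
    replace ((fst p + t * fst n - fst p) * fst n + (snd p + t * snd n - snd p) * snd n)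
      with (t * Cnorm2 n) by (unfold Cnorm2; ring).
    nra.
Qed.

Lemma not_kissing_Half_Half (p1 n1 p2 n2 : C) : ~ kissing (Half p1 n1) (Half p2 n2).
Proof.
  intros (H1 & H2 & [z [[E1 E2] Hu]] & Hno); cbn in H1, H2, E1, E2.
  pose proof (Cnorm2_gt0 n1 H1) as HN1.
  rewrite cdot_sub in E1, E2.
  destruct p1 as [a1 b1], n1 as [u1 v1], p2 as [a2 b2], n2 as [u2 v2], z as [zx zy].
  unfold Cnorm2 in HN1; cbn [fst snd] in *.
  set (X := u1 * v2 - v1 * u2).
  destruct (Req_dec X 0) as [HX|HX].
  - (* parallel boundaries meet along a whole line *)
    assert (Hz : (zx - v1, zy + u1) = (zx, zy)).
    { symmetry; apply Hu; cbn [on_boundary]; rewrite !cdot_sub; cbn [fst snd]; split.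
      - rewrite <- E1; ring.
      - rewrite <- E2; unfold X in HX; lra. }
    injection Hz as F1 F2; nra.
  - (* otherwise the point where both boundaries are shifted by one unit lies in both *)
    set (k1 := 1 + a1 * u1 + b1 * v1); set (k2 := 1 + a2 * u2 + b2 * v2).
    apply (Hno ((k1 * v2 - k2 * v1) / X, (u1 * k2 - u2 * k1) / X)); cbn [in_disk].
    rewrite !cdot_sub; cbn [fst snd]; split.
    + replace (((k1 * v2 - k2 * v1) / X - a1) * u1 + ((u1 * k2 - u2 * k1) / X - b1) * v1) with 1
        by (unfold k1, k2, X in *; field; auto).
      lra.
    + replace (((k1 * v2 - k2 * v1) / X - a2) * u2 + ((u1 * k2 - u2 * k1) / X - b2) * v2) with 1
        by (unfold k1, k2, X in *; field; auto).
      lra.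
Qed.

Lemma kissing_circ_data_dist X Y cX rX cY rY : kissing X Y ->
  circ_data X = Some (cX, rX) -> circ_data Y = Some (cY, rY) ->
  Cnorm2 (cY - cX) = (rX + rY) ^ 2.
Proof.
  intros HXY HX HY; pose proof HXY as (WX & WY & _ & Hno).
  destruct X as [c1 r1|c1 r1|]; destruct Y as [c2 r2|c2 r2|]; try discriminate;
    injection HX as <- <-; injection HY as <- <-; cbn in WX, WY.
  - exact (kissing_Inner_Inner _ _ _ _ HXY).
  - rewrite (kissing_Inner_Outer _ _ _ _ HXY); ring.
  - apply kissing_sym, kissing_Inner_Outer in HXY.
    rewrite !Cnorm2_sub in *; lra.
  - exfalso; exact (Outer_Outer_overlap c1 c2 r1 r2 WX WY Hno).
Qed.

Lemma kissing_Half (X : disk) (p n : C) : kissing X (Half p n) ->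
  exists c r, X = Inner c r /\ 0 < r /\
    cdot (c - p) n ^ 2 = r ^ 2 * Cnorm2 n /\ cdot (c - p) n <= 0.
Proof.
  intros HX; pose proof HX as (WX & Wn & _ & Hno); cbn in Wn.
  destruct X as [c r|c r|p' n']; cbn in WX.
  - exists c, r; auto using kissing_Inner_Half.
  - exfalso; exact (Outer_Half_overlap c p n r WX Wn Hno).
  - exfalso; exact (not_kissing_Half_Half p' n' p n HX).
Qed.

Lemma tricycle_of_kissing A B D :
  kissing A B -> kissing A D -> kissing B D -> tricycle A B D.
Proof. unfold kissing, tricycle; tauto. Qed.

Lemma descartes_of_kissing A B D E :
  kissing A B -> kissing A D -> kissing A E -> kissing B D -> kissing B E -> kissing D E ->
  descartes A B D E.
Proof. unfold kissing, descartes, tricycle; tauto. Qed.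

(** * The Descartes circle theorem *)

Definition descartes_relation (k1 k2 k3 k4 : R) : Prop :=
  (k1 + k2 + k3 + k4) ^ 2 = 2 * (k1 ^ 2 + k2 ^ 2 + k3 ^ 2 + k4 ^ 2).

(* Determinant of the Gram matrix of [x1 - x4], [x2 - x4], [x3 - x4], written through the
   squared distances [dij = |xi - xj|^2]. *)
Definition gram_det (d12 d13 d14 d23 d24 d34 : R) : R :=
  let g12 := (d14 + d24 - d12) / 2 in
  let g13 := (d14 + d34 - d13) / 2 in
  let g23 := (d24 + d34 - d23) / 2 in
  d14 * (d24 * d34 - g23 * g23) - g12 * (g12 * d34 - g23 * g13) + g13 * (g12 * g23 - d24 * g13).

Lemma gram_det_planar x1 y1 x2 y2 x3 y3 x4 y4 :
  gram_det ((x2 - x1) ^ 2 + (y2 - y1) ^ 2) ((x3 - x1) ^ 2 + (y3 - y1) ^ 2)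
           ((x4 - x1) ^ 2 + (y4 - y1) ^ 2) ((x3 - x2) ^ 2 + (y3 - y2) ^ 2)
           ((x4 - x2) ^ 2 + (y4 - y2) ^ 2) ((x4 - x3) ^ 2 + (y4 - y3) ^ 2) = 0.
Proof. unfold gram_det; cbv zeta; field. Qed.

Lemma gram_det_kissing r1 r2 r3 r4 : r1 <> 0 -> r2 <> 0 -> r3 <> 0 -> r4 <> 0 ->
  gram_det ((r1 + r2) ^ 2) ((r1 + r3) ^ 2) ((r1 + r4) ^ 2)
           ((r2 + r3) ^ 2) ((r2 + r4) ^ 2) ((r3 + r4) ^ 2)
  = 4 * (r1 * r2 * r3 * r4) ^ 2 *
    ((/ r1 + / r2 + / r3 + / r4) ^ 2 - 2 * ((/ r1) ^ 2 + (/ r2) ^ 2 + (/ r3) ^ 2 + (/ r4) ^ 2)).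
Proof. intros; unfold gram_det; cbv zeta; field; auto. Qed.

Lemma descartes_relation_circles x1 y1 x2 y2 x3 y3 x4 y4 r1 r2 r3 r4 :
  r1 <> 0 -> r2 <> 0 -> r3 <> 0 -> r4 <> 0 ->
  (x2 - x1) ^ 2 + (y2 - y1) ^ 2 = (r1 + r2) ^ 2 ->
  (x3 - x1) ^ 2 + (y3 - y1) ^ 2 = (r1 + r3) ^ 2 ->
  (x4 - x1) ^ 2 + (y4 - y1) ^ 2 = (r1 + r4) ^ 2 ->
  (x3 - x2) ^ 2 + (y3 - y2) ^ 2 = (r2 + r3) ^ 2 ->
  (x4 - x2) ^ 2 + (y4 - y2) ^ 2 = (r2 + r4) ^ 2 ->
  (x4 - x3) ^ 2 + (y4 - y3) ^ 2 = (r3 + r4) ^ 2 ->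
  descartes_relation (/ r1) (/ r2) (/ r3) (/ r4).
Proof.
  intros H1 H2 H3 H4 E12 E13 E14 E23 E24 E34.
  pose proof (gram_det_planar x1 y1 x2 y2 x3 y3 x4 y4) as G.
  rewrite E12, E13, E14, E23, E24, E34, gram_det_kissing in G by auto.
  assert (P : (r1 * r2 * r3 * r4) ^ 2 <> 0)
    by (apply pow_nonzero; repeat apply Rmult_integral_contrapositive_currified; auto).
  unfold descartes_relation.
  apply Rmult_integral in G as [G|G]; [exfalso; apply P; lra | lra].
Qed.

Lemma same_side_product hi hj ri rj N : 0 < ri -> 0 < rj -> 0 < N ->
  hi ^ 2 = ri ^ 2 * N -> hj ^ 2 = rj ^ 2 * N -> hi <= 0 -> hj <= 0 ->
  hi * hj = ri * rj * N.
Proof.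
  intros Hri Hrj HN Hi Hj Hi0 Hj0.
  assert (E : (hi * hj) ^ 2 = (ri * rj * N) ^ 2)
    by (replace ((hi * hj) ^ 2) with (hi ^ 2 * hj ^ 2) by ring; rewrite Hi, Hj; ring).
  assert (0 <= hi * hj) by nra.
  assert (0 <= ri * rj * N) by (apply Rmult_le_pos; nra).
  nra.
Qed.

(* [yi nx - xi ny] is the (scaled) abscissa along the line of the foot of circle [i]. *)
Lemma kissing_line_feet_dist xi yi xj yj ri rj nx ny px py :
  let N := nx ^ 2 + ny ^ 2 in
  let hi := (xi - px) * nx + (yi - py) * ny in
  let hj := (xj - px) * nx + (yj - py) * ny in
  (xj - xi) ^ 2 + (yj - yi) ^ 2 = (ri + rj) ^ 2 ->
  hi ^ 2 = ri ^ 2 * N -> hj ^ 2 = rj ^ 2 * N -> hi * hj = ri * rj * N ->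
  ((yi * nx - xi * ny) - (yj * nx - xj * ny)) ^ 2 = 4 * N * ri * rj.
Proof.
  intros N hi hj D Hi Hj Hij.
  assert (L : N * ((xj - xi) ^ 2 + (yj - yi) ^ 2)
              = (hi - hj) ^ 2 + ((yi * nx - xi * ny) - (yj * nx - xj * ny)) ^ 2)
    by (unfold N, hi, hj; ring).
  rewrite D in L.
  replace ((hi - hj) ^ 2) with (hi ^ 2 + hj ^ 2 - 2 * (hi * hj)) in L by ring.
  rewrite Hi, Hj, Hij in L; lra.
Qed.

Lemma descartes_relation_line x1 y1 x2 y2 x3 y3 r1 r2 r3 nx ny px py :
  0 < r1 -> 0 < r2 -> 0 < r3 -> 0 < nx ^ 2 + ny ^ 2 ->
  (x2 - x1) ^ 2 + (y2 - y1) ^ 2 = (r1 + r2) ^ 2 ->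
  (x3 - x1) ^ 2 + (y3 - y1) ^ 2 = (r1 + r3) ^ 2 ->
  (x3 - x2) ^ 2 + (y3 - y2) ^ 2 = (r2 + r3) ^ 2 ->
  ((x1 - px) * nx + (y1 - py) * ny) ^ 2 = r1 ^ 2 * (nx ^ 2 + ny ^ 2) ->
  ((x2 - px) * nx + (y2 - py) * ny) ^ 2 = r2 ^ 2 * (nx ^ 2 + ny ^ 2) ->
  ((x3 - px) * nx + (y3 - py) * ny) ^ 2 = r3 ^ 2 * (nx ^ 2 + ny ^ 2) ->
  (x1 - px) * nx + (y1 - py) * ny <= 0 ->
  (x2 - px) * nx + (y2 - py) * ny <= 0 ->
  (x3 - px) * nx + (y3 - py) * ny <= 0 ->
  descartes_relation (/ r1) (/ r2) (/ r3) 0.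
Proof.
  intros P1 P2 P3 PN E12 E13 E23 F1 F2 F3 G1 G2 G3.
  pose proof (same_side_product _ _ _ _ _ P1 P2 PN F1 F2 G1 G2) as H12.
  pose proof (same_side_product _ _ _ _ _ P1 P3 PN F1 F3 G1 G3) as H13.
  pose proof (same_side_product _ _ _ _ _ P2 P3 PN F2 F3 G2 G3) as H23.
  pose proof (kissing_line_feet_dist x1 y1 x2 y2 r1 r2 nx ny px py E12 F1 F2 H12) as U12.
  pose proof (kissing_line_feet_dist x1 y1 x3 y3 r1 r3 nx ny px py E13 F1 F3 H13) as U13.
  pose proof (kissing_line_feet_dist x2 y2 x3 y3 r2 r3 nx ny px py E23 F2 F3 H23) as U23.
  cbv zeta in U12, U13, U23.
  set (N := nx ^ 2 + ny ^ 2) in *.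
  set (u := (y1 * nx - x1 * ny) - (y2 * nx - x2 * ny)) in *.
  set (w := (y2 * nx - x2 * ny) - (y3 * nx - x3 * ny)) in *.
  assert (Huw : (u + w) ^ 2 = 4 * N * r1 * r3) by (rewrite <- U13; unfold u, w; ring).
  assert (H2uw : 2 * u * w = 4 * N * (r1 * r3 - r1 * r2 - r2 * r3)).
  { replace (2 * u * w) with ((u + w) ^ 2 - u ^ 2 - w ^ 2) by ring.
    rewrite Huw, U12, U23; ring. }
  (* eliminate the abscissas through [(2 u w)^2 = 4 u^2 w^2] *)
  assert (K : 16 * N ^ 2 * ((r1 * r3 - r1 * r2 - r2 * r3) ^ 2 - 4 * r1 * r2 ^ 2 * r3) = 0).
  { replace (16 * N ^ 2 * ((r1 * r3 - r1 * r2 - r2 * r3) ^ 2 - 4 * r1 * r2 ^ 2 * r3))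
      with ((2 * u * w) ^ 2 - 4 * u ^ 2 * w ^ 2) by (rewrite H2uw, U12, U23; ring).
    ring. }
  assert (K2 : (r1 * r3 - r1 * r2 - r2 * r3) ^ 2 - 4 * r1 * r2 ^ 2 * r3 = 0).
  { apply Rmult_integral in K as [K|K]; auto.
    exfalso; assert (0 < 16 * N ^ 2) by nra; lra. }
  unfold descartes_relation.
  assert (Z : (/ r1 + / r2 + / r3 + 0) ^ 2 - 2 * ((/ r1) ^ 2 + (/ r2) ^ 2 + (/ r3) ^ 2 + 0 ^ 2)
              = - ((r1 * r3 - r1 * r2 - r2 * r3) ^ 2 - 4 * r1 * r2 ^ 2 * r3) / (r1 * r2 * r3) ^ 2)
    by (field; lra).
  rewrite K2 in Z; lra.
Qed.

Lemma curvature_circ_data X c r : wf_disk X -> circ_data X = Some (c, r) ->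
  curvature X = / r /\ r <> 0.
Proof.
  intros W H; destruct X; cbn in H, W |- *; try discriminate;
    injection H as <- <-; split; try lra; field; lra.
Qed.

Lemma descartes_relation_kissing_circles A B D E cA rA cB rB cD rD cE rE :
  kissing A B -> kissing A D -> kissing A E -> kissing B D -> kissing B E -> kissing D E ->
  circ_data A = Some (cA, rA) -> circ_data B = Some (cB, rB) ->
  circ_data D = Some (cD, rD) -> circ_data E = Some (cE, rE) ->
  descartes_relation (curvature A) (curvature B) (curvature D) (curvature E).
Proof.
  intros KAB KAD KAE KBD KBE KDE HA HB HD HE.
  pose proof (kissing_circ_data_dist _ _ _ _ _ _ KAB HA HB).
  pose proof (kissing_circ_data_dist _ _ _ _ _ _ KAD HA HD).
  pose proof (kissing_circ_data_dist _ _ _ _ _ _ KAE HA HE).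
  pose proof (kissing_circ_data_dist _ _ _ _ _ _ KBD HB HD).
  pose proof (kissing_circ_data_dist _ _ _ _ _ _ KBE HB HE).
  pose proof (kissing_circ_data_dist _ _ _ _ _ _ KDE HD HE).
  destruct (curvature_circ_data A _ _ (proj1 KAB) HA) as [-> NA].
  destruct (curvature_circ_data B _ _ (proj1 KBD) HB) as [-> NB].
  destruct (curvature_circ_data D _ _ (proj1 KDE) HD) as [-> ND].
  destruct (curvature_circ_data E _ _ (proj1 (proj2 KDE)) HE) as [-> NE].
  rewrite !Cnorm2_sub in *.
  eapply descartes_relation_circles; eauto.
Qed.

Lemma descartes_relation_kissing_line A B D p n :
  kissing A B -> kissing A D -> kissing B D ->
  kissing A (Half p n) -> kissing B (Half p n) -> kissing D (Half p n) ->
  descartes_relation (curvature A) (curvature B) (curvature D) (curvature (Half p n)).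
Proof.
  intros KAB KAD KBD KA KB KD.
  destruct (kissing_Half _ _ _ KA) as (c1 & r1 & -> & Q1 & F1 & G1).
  destruct (kissing_Half _ _ _ KB) as (c2 & r2 & -> & Q2 & F2 & G2).
  destruct (kissing_Half _ _ _ KD) as (c3 & r3 & -> & Q3 & F3 & G3).
  pose proof (kissing_circ_data_dist _ _ c1 r1 c2 r2 KAB eq_refl eq_refl) as E12.
  pose proof (kissing_circ_data_dist _ _ c1 r1 c3 r3 KAD eq_refl eq_refl) as E13.
  pose proof (kissing_circ_data_dist _ _ c2 r2 c3 r3 KBD eq_refl eq_refl) as E23.
  pose proof (Cnorm2_gt0 n (proj1 (proj2 KA))) as HN.
  rewrite !cdot_sub, !Cnorm2_sub in *; unfold Cnorm2 in *; cbn [curvature].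
  eapply descartes_relation_line; eauto.
Qed.

Lemma disk_cases X : (exists p n, X = Half p n) \/ (exists c r, circ_data X = Some (c, r)).
Proof. destruct X as [c r|c r|p n]; [right|right|left]; cbn; eauto. Qed.

Theorem descartes_circle_theorem A B D E : descartes A B D E ->
  descartes_relation (curvature A) (curvature B) (curvature D) (curvature E).
Proof.
  intros [(WA & WB & WD & TAB & TAD & TBD) (WE & TAE & TBE & TDE)].
  assert (KAB : kissing A B) by exact (conj WA (conj WB TAB)).
  assert (KAD : kissing A D) by exact (conj WA (conj WD TAD)).
  assert (KAE : kissing A E) by exact (conj WA (conj WE TAE)).
  assert (KBD : kissing B D) by exact (conj WB (conj WD TBD)).
  assert (KBE : kissing B E) by exact (conj WB (conj WE TBE)).
  assert (KDE : kissing D E) by exact (conj WD (conj WE TDE)).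
  pose proof (kissing_sym _ _ KAB); pose proof (kissing_sym _ _ KAD);
    pose proof (kissing_sym _ _ KAE); pose proof (kissing_sym _ _ KBD);
    pose proof (kissing_sym _ _ KBE); pose proof (kissing_sym _ _ KDE).
  destruct (disk_cases E) as [(p & n & ->)|(cE & rE & HE)].
  { apply descartes_relation_kissing_line; auto. }
  destruct (disk_cases D) as [(p & n & ->)|(cD & rD & HD)].
  { enough (descartes_relation (curvature A) (curvature B) (curvature E) (curvature (Half p n)))
      by (unfold descartes_relation in *; lra).
    apply descartes_relation_kissing_line; auto. }
  destruct (disk_cases B) as [(p & n & ->)|(cB & rB & HB)].
  { enough (descartes_relation (curvature A) (curvature D) (curvature E) (curvature (Half p n)))
      by (unfold descartes_relation in *; lra).
    apply descartes_relation_kissing_line; auto. }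
  destruct (disk_cases A) as [(p & n & ->)|(cA & rA & HA)].
  { enough (descartes_relation (curvature B) (curvature D) (curvature E) (curvature (Half p n)))
      by (unfold descartes_relation in *; lra).
    apply descartes_relation_kissing_line; auto. }
  eapply descartes_relation_kissing_circles; eauto.
Qed.

(** * Integrality *)

Definition integral_tricycle (X Y W : disk) : Prop :=
  exists k1 k2 k3 s : Z,
    curvature X = IZR k1 /\ curvature Y = IZR k2 /\ curvature W = IZR k3 /\
    (s * s = k1 * k2 + k2 * k3 + k3 * k1)%Z.

Lemma descartes_relation_solve (k1 k2 k3 s : Z) (e : R) :
  (s * s = k1 * k2 + k2 * k3 + k3 * k1)%Z ->
  descartes_relation (IZR k1) (IZR k2) (IZR k3) e ->
  exists s', (s' * s' = k1 * k2 + k2 * k3 + k3 * k1)%Z /\ e = IZR (k1 + k2 + k3 + 2 * s').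
Proof.
  intros Hs He; unfold descartes_relation in He.
  pose proof (f_equal IZR Hs) as HsR; rewrite !plus_IZR, !mult_IZR in HsR.
  assert (K : (e - (IZR k1 + IZR k2 + IZR k3) - 2 * IZR s)
              * (e - (IZR k1 + IZR k2 + IZR k3) + 2 * IZR s) = 0) by nra.
  apply Rmult_integral in K as [K|K]; [exists s | exists (- s)%Z]; split; try nia;
    rewrite !plus_IZR, !mult_IZR, ?opp_IZR; lra.
Qed.

(* With [e = k1 + k2 + k3 + 2 s], each new tricycle has square discriminant, e.g.
   [k1 k2 + k2 e + e k1 = (k1 + k2 + s)^2]. *)
Lemma integral_tricycle_descartes A B D E : integral_tricycle A B D -> descartes A B D E ->
  integral_tricycle A B E /\ integral_tricycle A E D /\ integral_tricycle E B D.
Proof.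
  intros (k1 & k2 & k3 & s & HA & HB & HD & Hs) HE.
  pose proof (descartes_circle_theorem _ _ _ _ HE) as Rel; rewrite HA, HB, HD in Rel.
  destruct (descartes_relation_solve k1 k2 k3 s _ Hs Rel) as (s' & Hs' & He).
  split; [|split].
  - exists k1, k2, (k1 + k2 + k3 + 2 * s')%Z, (k1 + k2 + s')%Z; repeat split; auto; nia.
  - exists k1, (k1 + k2 + k3 + 2 * s')%Z, k3, (k1 + k3 + s')%Z; repeat split; auto; nia.
  - exists (k1 + k2 + k3 + 2 * s')%Z, k2, k3, (k2 + k3 + s')%Z; repeat split; auto; nia.
Qed.

Lemma integral_tricycle_gen A0 B0 D0 A B D :
  integral_tricycle A0 B0 D0 -> gen_tricycle A0 B0 D0 A B D -> integral_tricycle A B D.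
Proof.
  intros H0 G; induction G; auto;
    match goal with HE : descartes _ _ _ _ |- _ =>
      pose proof (integral_tricycle_descartes _ _ _ _ IHG HE); tauto end.
Qed.

Lemma integral_packing_of_tricycle A0 B0 D0 :
  integral_tricycle A0 B0 D0 -> integral_packing A0 B0 D0.
Proof.
  intros H0 X (A & B & D & G & HX).
  destruct (integral_tricycle_gen _ _ _ _ _ _ H0 G) as (k1 & k2 & k3 & s & HA & HB & HD & _).
  destruct HX as [-> | [-> | ->]]; eauto.
Qed.

(** * Sufficient conditions for tangency *)

(* The only candidate is the point dividing the segment of centres in the ratio [R : s];
   uniqueness is the equality case of Cauchy-Schwarz. *)
Lemma circles_unique_common_point (p q : C) (R s rho : R) :
  0 < R -> 0 < R + s -> 0 <= rho -> s ^ 2 = rho ^ 2 -> Cnorm2 (q - p) = (R + s) ^ 2 ->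
  exists! z, Cmod (z - p) = R /\ Cmod (z - q) = rho.
Proof.
  intros HR HRs Hrho Hs Hd; rewrite Cnorm2_sub in Hd.
  destruct p as [px py], q as [qx qy]; cbn [fst snd] in Hd.
  set (t := R / (R + s)).
  exists (px + t * (qx - px), py + t * (qy - py)); split.
  - split; apply Cmod_eq_sqr; auto; try lra; rewrite Cnorm2_sub; cbn [fst snd].
    + replace ((px + t * (qx - px) - px) ^ 2 + (py + t * (qy - py) - py) ^ 2)
        with (t ^ 2 * ((qx - px) ^ 2 + (qy - py) ^ 2)) by ring.
      rewrite Hd; unfold t; field; lra.
    + replace ((px + t * (qx - px) - qx) ^ 2 + (py + t * (qy - py) - qy) ^ 2)
        with ((t - 1) ^ 2 * ((qx - px) ^ 2 + (qy - py) ^ 2)) by ring.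
      rewrite Hd, <- Hs; unfold t; field; lra.
  - intros [zx zy] [Hz1 Hz2].
    apply Cmod_eq_sqr in Hz1, Hz2; try lra; rewrite Cnorm2_sub in Hz1, Hz2; cbn [fst snd] in *.
    assert (Hdot : (zx - px) * (qx - px) + (zy - py) * (qy - py) = R * (R + s)) by nra.
    assert (E : ((R + s) * (zx - px) - R * (qx - px)) ^ 2
                + ((R + s) * (zy - py) - R * (qy - py)) ^ 2 = 0).
    { replace (((R + s) * (zx - px) - R * (qx - px)) ^ 2
               + ((R + s) * (zy - py) - R * (qy - py)) ^ 2)
        with ((R + s) ^ 2 * ((zx - px) ^ 2 + (zy - py) ^ 2)
              - 2 * R * (R + s) * ((zx - px) * (qx - px) + (zy - py) * (qy - py))
              + R ^ 2 * ((qx - px) ^ 2 + (qy - py) ^ 2)) by ring.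
      rewrite Hz1, Hdot, Hd; ring. }
    apply sum_sqr_eq0 in E as [E1 E2].
    f_equal; unfold t; field_simplify; try lra; field_simplify_eq; lra.
Qed.

Lemma kissing_Inner_Inner_of_dist (c1 c2 : C) (r1 r2 : R) : 0 < r1 -> 0 < r2 ->
  Cnorm2 (c2 - c1) = (r1 + r2) ^ 2 -> kissing (Inner c1 r1) (Inner c2 r2).
Proof.
  intros H1 H2 Hd; split; [exact H1|]; split; [exact H2|]; split.
  - apply (circles_unique_common_point c1 c2 r1 r2 r2); auto; lra.
  - intros z [Z1 Z2]; cbn [in_disk] in Z1, Z2.
    assert (E : Cmod (c2 - c1) = r1 + r2) by (apply Cmod_eq_sqr; auto; lra).
    pose proof (Cmod_triangle (z - c1) (c2 - z)) as T.
    replace (z - c1 + (c2 - z))%C with (c2 - c1)%C in T by ring.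
    replace (c2 - z)%C with (- (z - c2))%C in T by ring.
    rewrite Cmod_opp in T; lra.
Qed.

Lemma kissing_Outer_Inner_of_dist (c0 c : C) (r0 r : R) : 0 < r -> r < r0 ->
  Cnorm2 (c - c0) = (r0 - r) ^ 2 -> kissing (Outer c0 r0) (Inner c r).
Proof.
  intros H1 H2 Hd; split; [cbn; lra|]; split; [exact H1|]; split.
  - apply (circles_unique_common_point c0 c r0 (- r) r); auto; lra.
  - intros z [Z1 Z2]; cbn [in_disk] in Z1, Z2.
    assert (E : Cmod (c - c0) = r0 - r) by (apply Cmod_eq_sqr; auto; lra).
    pose proof (Cmod_triangle (z - c) (c - c0)) as T.
    replace (z - c + (c - c0))%C with (z - c0)%C in T by ring.
    lra.
Qed.

(** * The configuration attached to a lattice *)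

Definition major_disk (B : Z) : disk := Outer 0 (/ IZR B).

Definition corona_curvature (B : Z) (v : Z * Z) : R :=
  IZR B + (IZR (fst v) * IZR (fst v) + IZR (snd v) * IZR (snd v)).

(* Forced by [spin (major_disk B) (corona_disk B v) = v]: the centre is [v^2 r0 r] with
   [v^2] the complex square, [r0 = - 1/B] and [r = 1/(B + |v|^2)]. *)
Definition corona_center (B : Z) (v : Z * Z) : C :=
  (- (IZR (fst v) * IZR (fst v) - IZR (snd v) * IZR (snd v)) / (IZR B * corona_curvature B v),
   - (2 * IZR (fst v) * IZR (snd v)) / (IZR B * corona_curvature B v)).

Definition corona_disk (B : Z) (v : Z * Z) : disk :=
  Inner (corona_center B v) (/ corona_curvature B v).

Lemma znorm2_gt0_of_zcross v w : zcross v w <> 0%Z -> (0 < znorm2 v)%Z.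
Proof.
  destruct v as [x y], w; unfold zcross, znorm2, zdot; cbn [fst snd]; intros H.
  destruct (Z.eq_dec x 0), (Z.eq_dec y 0); subst; nia.
Qed.

Lemma zcross_swap v w : zcross w v = (- zcross v w)%Z.
Proof. unfold zcross; ring. Qed.

Section Corona.

Variable B : Z.
Hypothesis B_pos : (0 < B)%Z.

Lemma corona_curvature_gt0 v : 0 < corona_curvature B v.
Proof. pose proof (IZR_lt _ _ B_pos); unfold corona_curvature; nra. Qed.

Lemma curvature_corona_disk v : curvature (corona_disk B v) = IZR (B + znorm2 v).
Proof.
  cbn; rewrite Rinv_inv; unfold corona_curvature, znorm2, zdot.
  rewrite !plus_IZR, !mult_IZR; reflexivity.
Qed.

Lemma curvature_major_disk : curvature (major_disk B) = IZR (- B).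
Proof. cbn; rewrite Rinv_inv, opp_IZR; reflexivity. Qed.

Lemma corona_disk_opp x y : corona_disk B ((- x)%Z, (- y)%Z) = corona_disk B (x, y).
Proof.
  unfold corona_disk, corona_center, corona_curvature; cbn [fst snd].
  rewrite !opp_IZR, !Rmult_opp_opp.
  replace (2 * - IZR x * - IZR y) with (2 * IZR x * IZR y) by ring; reflexivity.
Qed.

Lemma kissing_major_corona v : (0 < znorm2 v)%Z -> kissing (major_disk B) (corona_disk B v).
Proof.
  intros Hv; unfold znorm2, zdot in Hv; apply IZR_lt in Hv; rewrite plus_IZR, !mult_IZR in Hv.
  pose proof (IZR_lt _ _ B_pos); pose proof (corona_curvature_gt0 v).
  apply kissing_Outer_Inner_of_dist.
  - apply Rinv_0_lt_compat; auto.
  - apply Rinv_lt_contravar; [nra|]; unfold corona_curvature; lra.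
  - rewrite Cnorm2_sub; unfold corona_center, corona_curvature in *; cbn [fst snd RtoC].
    field; lra.
Qed.

Lemma kissing_corona_corona v w : (zcross v w = B \/ zcross v w = - B)%Z ->
  kissing (corona_disk B v) (corona_disk B w).
Proof.
  intros Hvw; pose proof (IZR_lt _ _ B_pos) as HB.
  pose proof (corona_curvature_gt0 v); pose proof (corona_curvature_gt0 w).
  apply kissing_Inner_Inner_of_dist; try (apply Rinv_0_lt_compat; auto).
  assert (Hc : (zcross v w * zcross v w = B * B)%Z) by (destruct Hvw as [-> | ->]; ring).
  apply (f_equal IZR) in Hc; unfold zcross in Hc; rewrite !mult_IZR, minus_IZR, !mult_IZR in Hc.
  rewrite Cnorm2_sub; unfold corona_center, corona_curvature in *; cbn [fst snd] in *.
  destruct v as [x y], w as [u t]; cbn [fst snd] in *.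
  match goal with |- ?lhs = ?rhs =>
    assert (E : lhs - rhs = 4 * ((IZR x * IZR t - IZR u * IZR y) ^ 2 - IZR B ^ 2)
                            / (IZR B ^ 2 * (IZR B + (IZR x * IZR x + IZR y * IZR y))
                                         * (IZR B + (IZR u * IZR u + IZR t * IZR t))))
      by (field; lra)
  end.
  replace ((IZR x * IZR t - IZR u * IZR y) ^ 2 - IZR B ^ 2) with 0 in E by lra.
  unfold Rdiv in E; rewrite Rmult_0_r, Rmult_0_l in E; lra.
Qed.

Lemma is_spin_major_corona v : is_spin (major_disk B) (corona_disk B v) (zvec v).
Proof.
  pose proof (IZR_lt _ _ B_pos); pose proof (corona_curvature_gt0 v).
  exists 0%C, (- / IZR B), (corona_center B v), (/ corona_curvature B v).
  do 2 (split; [reflexivity|]).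
  unfold zvec, corona_center, corona_curvature in *.
  unfold Cdiv, Cminus, Cmult, Cinv, Cplus, Copp, RtoC; cbn [fst snd].
  f_equal; field; lra.
Qed.

Lemma tricycle_major_corona v w : (zcross v w = B \/ zcross v w = - B)%Z ->
  tricycle (major_disk B) (corona_disk B v) (corona_disk B w).
Proof.
  intros Hvw.
  assert (Hwv : (zcross w v = B \/ zcross w v = - B)%Z) by (rewrite zcross_swap; lia).
  apply tricycle_of_kissing; [| | apply kissing_corona_corona; assumption];
    apply kissing_major_corona.
  - apply (znorm2_gt0_of_zcross _ w); lia.
  - apply (znorm2_gt0_of_zcross _ v); lia.
Qed.

End Corona.

(** * Reaching every unimodular pair *)

Definition unimodular (al be ga de : Z) : Prop :=
  (al * de - be * ga = 1 \/ al * de - be * ga = -1)%Z.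

Lemma zcross_zlin a b al be ga de :
  zcross (zlin al be a b) (zlin ga de a b) = ((al * de - be * ga) * zcross a b)%Z.
Proof. destruct a, b; unfold zcross, zlin; cbn [fst snd]; ring. Qed.

Lemma zlin10 a b : zlin 1 0 a b = a.
Proof. destruct a, b; unfold zlin; cbn [fst snd]; f_equal; ring. Qed.

Lemma zlin01 a b : zlin 0 1 a b = b.
Proof. destruct a, b; unfold zlin; cbn [fst snd]; f_equal; ring. Qed.

Lemma zlin11 a b : zlin 1 1 a b = zadd a b.
Proof. destruct a, b; unfold zlin, zadd; cbn [fst snd]; f_equal; ring. Qed.

Lemma zlin1N a b : zlin 1 (-1) a b = zsub a b.
Proof. destruct a, b; unfold zlin, zsub; cbn [fst snd]; f_equal; ring. Qed.

Local Open Scope Z_scope.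

(* Gauss reduction: by Lagrange's identity [|u|^2 |w|^2 = (u.w)^2 + 1], a unimodular pair
   with [2 |u.w| <= min (|u|^2, |w|^2)] has [|u| = |w| = 1]. *)
Lemma unimodular_descent al be ga de : unimodular al be ga de ->
  2 < al ^ 2 + be ^ 2 + ga ^ 2 + de ^ 2 ->
  (al - ga) ^ 2 + (be - de) ^ 2 < al ^ 2 + be ^ 2 \/
  (al + ga) ^ 2 + (be + de) ^ 2 < al ^ 2 + be ^ 2 \/
  (ga - al) ^ 2 + (de - be) ^ 2 < ga ^ 2 + de ^ 2 \/
  (ga + al) ^ 2 + (de + be) ^ 2 < ga ^ 2 + de ^ 2.
Proof.
  intros Hdet Hsum.
  set (p := al ^ 2 + be ^ 2) in *; set (q := ga ^ 2 + de ^ 2) in *; set (s := al * ga + be * de).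
  assert (Lagrange : p * q = s ^ 2 + (al * de - be * ga) ^ 2) by (unfold p, q, s; ring).
  replace ((al * de - be * ga) ^ 2) with 1 in Lagrange by (destruct Hdet as [-> | ->]; reflexivity).
  replace ((al - ga) ^ 2 + (be - de) ^ 2) with (p - 2 * s + q) by (unfold p, q, s; ring).
  replace ((al + ga) ^ 2 + (be + de) ^ 2) with (p + 2 * s + q) by (unfold p, q, s; ring).
  replace ((ga - al) ^ 2 + (de - be) ^ 2) with (p - 2 * s + q) by (unfold p, q, s; ring).
  replace ((ga + al) ^ 2 + (de + be) ^ 2) with (p + 2 * s + q) by (unfold p, q, s; ring).
  destruct (Z.lt_ge_cases q (2 * s)); [lia|].
  destruct (Z.lt_ge_cases q (- 2 * s)); [lia|].
  destruct (Z.lt_ge_cases p (2 * s)); [lia|].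
  destruct (Z.lt_ge_cases p (- 2 * s)); [lia|].
  exfalso.
  assert (0 <= (p - 2 * s) * (q + 2 * s)) by (apply Z.mul_nonneg_nonneg; lia).
  assert (0 <= (p + 2 * s) * (q - 2 * s)) by (apply Z.mul_nonneg_nonneg; lia).
  assert ((p - 2 * s) * (q + 2 * s) + (p + 2 * s) * (q - 2 * s) = 2 * (p * q) - 8 * s ^ 2)
    by ring.
  assert (0 <= s ^ 2) by (rewrite Z.pow_2_r; apply Z.square_nonneg).
  assert (Hpq : p * q = 1) by lia.
  assert (0 <= p) by (unfold p; rewrite !Z.pow_2_r;
                      pose proof (Z.square_nonneg al); pose proof (Z.square_nonneg be); lia).
  apply Z.eq_mul_1_nonneg in Hpq; lia.
Qed.

Lemma unimodular_small al be ga de : unimodular al be ga de ->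
  al ^ 2 + be ^ 2 + ga ^ 2 + de ^ 2 <= 2 ->
  (be = 0 /\ ga = 0 /\ (al = 1 \/ al = -1) /\ (de = 1 \/ de = -1)) \/
  (al = 0 /\ de = 0 /\ (be = 1 \/ be = -1) /\ (ga = 1 \/ ga = -1)).
Proof.
  intros Hdet Hsum.
  assert (al = -1 \/ al = 0 \/ al = 1) as [-> | [-> | ->]] by nia;
  assert (be = -1 \/ be = 0 \/ be = 1) as [-> | [-> | ->]] by nia;
  unfold unimodular in Hdet; nia.
Qed.

Local Close Scope Z_scope.

Definition lattice_disk (a b : Z * Z) (al be : Z) : disk :=
  corona_disk (Z.abs (zcross a b)) (zlin al be a b).

Section Reachability.

Variables a b : Z * Z.
Hypothesis cross_ab : zcross a b <> 0%Z.

Let B := Z.abs (zcross a b).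
Local Notation X := (lattice_disk a b).

Lemma abs_zcross_gt0 : (0 < B)%Z.
Proof. unfold B; lia. Qed.

Lemma zcross_lattice_unimodular al be ga de : unimodular al be ga de ->
  (zcross (zlin al be a b) (zlin ga de a b) = B
   \/ zcross (zlin al be a b) (zlin ga de a b) = - B)%Z.
Proof.
  intros Hdet; rewrite zcross_zlin; unfold B.
  destruct (Z.abs_spec (zcross a b)) as [[_ ->] | [_ ->]];
    destruct Hdet as [-> | ->]; lia.
Qed.

Lemma kissing_major_lattice al be ga de : unimodular al be ga de ->
  kissing (major_disk B) (X al be).
Proof.
  intros Hdet; apply kissing_major_corona; [exact abs_zcross_gt0|].
  apply (znorm2_gt0_of_zcross _ (zlin ga de a b)).
  pose proof abs_zcross_gt0; destruct (zcross_lattice_unimodular _ _ _ _ Hdet); lia.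
Qed.

Lemma unimodular_swap al be ga de : unimodular al be ga de -> unimodular ga de al be.
Proof. unfold unimodular; lia. Qed.

Lemma kissing_lattice al be ga de : unimodular al be ga de -> kissing (X al be) (X ga de).
Proof.
  intros Hdet; apply kissing_corona_corona; [exact abs_zcross_gt0|].
  exact (zcross_lattice_unimodular _ _ _ _ Hdet).
Qed.

Lemma descartes_lattice al be ga de ep et :
  unimodular al be ga de -> unimodular al be ep et -> unimodular ga de ep et ->
  descartes (major_disk B) (X al be) (X ga de) (X ep et).
Proof.
  intros H1 H2 H3.
  apply descartes_of_kissing; auto using kissing_lattice.
  - exact (kissing_major_lattice _ _ _ _ H1).
  - exact (kissing_major_lattice _ _ _ _ (unimodular_swap _ _ _ _ H1)).
  - exact (kissing_major_lattice _ _ _ _ (unimodular_swap _ _ _ _ H2)).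
Qed.

Definition reachable (al be ga de : Z) : Prop :=
  gen_tricycle (major_disk B) (X 1 0) (X 0 1) (major_disk B) (X al be) (X ga de).

Lemma reachable_shift_left al be ga de e al' be' : (e = 1 \/ e = -1)%Z ->
  reachable al be ga de -> unimodular al be ga de ->
  al' = (al + e * ga)%Z -> be' = (be + e * de)%Z -> reachable al' be' ga de.
Proof.
  intros He HR Hdet -> ->; eapply gt_step2; [exact HR|].
  apply descartes_lattice; unfold unimodular in *; destruct He as [-> | ->]; lia.
Qed.

Lemma reachable_shift_right al be ga de e ga' de' : (e = 1 \/ e = -1)%Z ->
  reachable al be ga de -> unimodular al be ga de ->
  ga' = (ga + e * al)%Z -> de' = (de + e * be)%Z -> reachable al be ga' de'.
Proof.
  intros He HR Hdet -> ->; eapply gt_step1; [exact HR|].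
  apply descartes_lattice; unfold unimodular in *; destruct He as [-> | ->]; lia.
Qed.

Lemma lattice_disk_opp al be : X (- al) (- be) = X al be.
Proof.
  unfold lattice_disk; replace (zlin (- al) (- be) a b)
    with ((- fst (zlin al be a b))%Z, (- snd (zlin al be a b))%Z)
    by (unfold zlin; cbn [fst snd]; f_equal; ring).
  rewrite corona_disk_opp; destruct (zlin al be a b); reflexivity.
Qed.

Lemma reachable_opp_left al be ga de : reachable (- al) (- be) ga de -> reachable al be ga de.
Proof. unfold reachable; rewrite lattice_disk_opp; auto. Qed.

Lemma reachable_opp_right al be ga de : reachable al be (- ga) (- de) -> reachable al be ga de.
Proof. unfold reachable; rewrite (lattice_disk_opp ga de); auto. Qed.

Lemma reachable_swap : reachable 0 1 1 0.
Proof.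
  apply reachable_opp_left.
  apply (reachable_shift_right 0 (-1) 1 1 1); try (cbv [unimodular]; lia).
  apply (reachable_shift_left 1 0 1 1 (-1)); try (cbv [unimodular]; lia).
  apply (reachable_shift_right 1 0 0 1 1); try (cbv [unimodular]; lia).
  apply gt_init.
Qed.

Lemma reachable_small al be ga de : unimodular al be ga de ->
  (al ^ 2 + be ^ 2 + ga ^ 2 + de ^ 2 <= 2)%Z -> reachable al be ga de.
Proof.
  intros Hdet Hsum.
  destruct (unimodular_small _ _ _ _ Hdet Hsum)
    as [(-> & -> & [-> | ->] & [-> | ->]) | (-> & -> & [-> | ->] & [-> | ->])];
    [ | apply reachable_opp_right | apply reachable_opp_left
      | apply reachable_opp_left, reachable_opp_right
      | | apply reachable_opp_right | apply reachable_opp_left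
      | apply reachable_opp_left, reachable_opp_right ];
    solve [apply gt_init | apply reachable_swap].
Qed.


Lemma reachable_of_unimodular_bounded (n : nat) al be ga de : unimodular al be ga de ->
  (al ^ 2 + be ^ 2 + ga ^ 2 + de ^ 2 <= Z.of_nat n)%Z -> reachable al be ga de.
Proof.
  revert al be ga de; induction n as [|n IH]; intros al be ga de Hdet Hn;
    (destruct (Z.le_gt_cases (al ^ 2 + be ^ 2 + ga ^ 2 + de ^ 2) 2) as [Hs|Hs];
     [exact (reachable_small _ _ _ _ Hdet Hs) | rewrite ?Nat2Z.inj_succ in Hn]); [lia|].
  destruct (unimodular_descent _ _ _ _ Hdet Hs) as [H | [H | [H | H]]]; unfold unimodular in Hdet.
  - apply (reachable_shift_left (al - ga) (be - de) ga de 1);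
      try (cbv [unimodular]; clear - Hdet; lia).
    apply IH; [cbv [unimodular]; clear - Hdet; lia | clear - H Hn; lia].
  - apply (reachable_shift_left (al + ga) (be + de) ga de (-1));
      try (cbv [unimodular]; clear - Hdet; lia).
    apply IH; [cbv [unimodular]; clear - Hdet; lia | clear - H Hn; lia].
  - apply (reachable_shift_right al be (ga - al) (de - be) 1);
      try (cbv [unimodular]; clear - Hdet; lia).
    apply IH; [cbv [unimodular]; clear - Hdet; lia | clear - H Hn; lia].
  - apply (reachable_shift_right al be (ga + al) (de + be) (-1));
      try (cbv [unimodular]; clear - Hdet; lia).
    apply IH; [cbv [unimodular]; clear - Hdet; lia | clear - H Hn; lia].
Qed.

Lemma reachable_of_unimodular al be ga de : unimodular al be ga de -> reachable al be ga de.
Proof.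
  intros Hdet;
    apply (reachable_of_unimodular_bounded (Z.to_nat (al ^ 2 + be ^ 2 + ga ^ 2 + de ^ 2)));
    [exact Hdet | lia].
Qed.

Lemma everted_lattice ep et : unimodular 1 0 ep et -> unimodular 0 1 ep et ->
  everted (major_disk B) (X 1 0) (X 0 1) (X ep et).
Proof.
  intros H1 H2; split; [apply descartes_lattice; auto; cbv [unimodular]; lia|].
  left; rewrite curvature_major_disk; apply IZR_le; pose proof abs_zcross_gt0; lia.
Qed.

Lemma in_major_corona_lattice al be : Z.gcd al be = 1%Z ->
  in_major_corona (major_disk B) (X 1 0) (X 0 1) (X al be).
Proof.
  intros Hg; destruct (Z.gcd_bezout al be 1 Hg) as [u [v Huv]].
  assert (Hdet : unimodular al be (- v) u) by (unfold unimodular; lia).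
  split.
  - exists (major_disk B), (X al be), (X (- v) u).
    split; [exact (reachable_of_unimodular _ _ _ _ Hdet) | auto].
  - exact (proj1 (proj2 (proj2 (kissing_major_lattice _ _ _ _ Hdet)))).
Qed.

Lemma integral_tricycle_lattice : integral_tricycle (major_disk B) (X 1 0) (X 0 1).
Proof.
  exists (- B)%Z, (B + znorm2 a)%Z, (B + znorm2 b)%Z, (zdot a b).
  unfold lattice_disk; fold B; rewrite zlin10, zlin01, curvature_major_disk, !curvature_corona_disk.
  do 3 (split; [reflexivity|]).
  (* Lagrange's identity [|a|^2 |b|^2 = (a.b)^2 + (a x b)^2] *)
  assert (E : (B * B = zcross a b * zcross a b)%Z) by apply Z.abs_square.
  destruct a as [a1 a2], b as [b1 b2]; unfold znorm2, zdot, zcross in *; cbn [fst snd] in *.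
  nia.
Qed.

End Reachability.
Theorem proposition3p2 (a b : Z * Z) :
  zcross a b <> 0%Z ->
  let B := Z.abs (zcross a b) in
  let B0 := (- B)%Z in
  let B1 := (B + znorm2 a)%Z in
  let B2 := (B + znorm2 b)%Z in
  let B3 := (B + znorm2 (zadd a b))%Z in
  let B4 := (B + znorm2 (zsub a b))%Z in
  exists D0 D1 D2 D3 D4 : disk,
    (* everted Descartes configuration with curvatures (B0,B1,B2,B3) *)
    everted D0 D1 D2 D3 /\
    curvature D0 = IZR B0 /\ curvature D1 = IZR B1 /\
    curvature D2 = IZR B2 /\ curvature D3 = IZR B3 /\
    (* the conjugate configuration, with B4 in place of B3 *)
    everted D0 D1 D2 D4 /\ curvature D4 = IZR B4 /\
    (* spinors *)
    is_spin D0 D1 (zvec a) /\ is_spin D0 D2 (zvec b) /\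
    (* the generated Apollonian packing is integral *)
    integral_packing D0 D1 D2 /\
    (* disks of the major corona indexed by coprime (alpha, beta) *)
    exists Dv : Z -> Z -> disk,
      (forall alpha beta : Z, Z.gcd alpha beta = 1%Z ->
         in_major_corona D0 D1 D2 (Dv alpha beta) /\
         curvature (Dv alpha beta)
           = IZR (B + znorm2 (zlin alpha beta a b))%Z) /\
      (forall alpha beta gamma delta : Z,
         Z.gcd alpha beta = 1%Z -> Z.gcd gamma delta = 1%Z ->
         (zcross (zlin alpha beta a b) (zlin gamma delta a b) = B \/
          zcross (zlin alpha beta a b) (zlin gamma delta a b) = (- B)%Z) ->
         tricycle D0 (Dv alpha beta) (Dv gamma delta)).
Proof.
  intros Hab; cbv zeta.
  set (B := Z.abs (zcross a b)).
  assert (HB : (0 < B)%Z) by (unfold B; lia).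
  assert (HX : forall al be,
             curvature (lattice_disk a b al be) = IZR (B + znorm2 (zlin al be a b)))
    by (intros; apply curvature_corona_disk).
  exists (major_disk B), (lattice_disk a b 1 0), (lattice_disk a b 0 1),
    (lattice_disk a b 1 1), (lattice_disk a b 1 (-1)).
  rewrite curvature_major_disk, !HX, zlin10, zlin01, zlin11, zlin1N.
  split; [apply everted_lattice; auto; cbv [unimodular]; lia|].
  do 4 (split; [reflexivity|]).
  split; [apply everted_lattice; auto; cbv [unimodular]; lia|].
  split; [reflexivity|].
  unfold lattice_disk at 1 2; fold B; rewrite zlin10, zlin01.
  split; [apply is_spin_major_corona, HB|].
  split; [apply is_spin_major_corona, HB|].
  split; [apply integral_packing_of_tricycle, integral_tricycle_lattice, Hab|].
  exists (lattice_disk a b); split.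
  - intros al be Hg; split; [apply in_major_corona_lattice; assumption | apply HX].
  - intros al be ga de _ _ Hvw; apply tricycle_major_corona; assumption.
Qed.
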